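(* Let $N\geqslant 2$, $1<p<N$, $p<q<p+\frac{p^2}{N}$, $a,\mu>0$ with $\mu a^{q(1-\gamma_{q})}<\alpha(N,p,q)$, and let \[h(t)=\frac{1}{p}t^p-\frac{\mu}{q}C_{N,p,q}a^{q(1-\gamma_{q})}t^{q\gamma_{q}}-\frac{1}{p^*S^{p^*/p}}t^{p^*},\quad t>0.\] Then $h$ has exactly two critical points on $(0,\infty)$, one a local minimum at negative level and the other a global maximum at positive level. In addition, there exist $R_{1}>R_{0}>0$ such that $h(R_{0})=h(R_{1})=0$, and $h(t)>0$ if and only if $t\in(R_{0},R_{1})$.
   Context: $p^*=\frac{Np}{N-p}$, $\gamma_{q}=\frac{N(q-p)}{pq}$. $S$ is the optimal constant in $S\lVert u\rVert_{p^*}^p\leqslant\lVert\nabla u\rVert_p^p$; $C_{N,p,q}$ is the optimal constant in $\lVert u\rVert_q^q\leqslant C_{N,p,q}\lVert\nabla u\rVert_p^{q\gamma_q}\lVert u\rVert_p^{q(1-\gamma_q)}$. $\alpha(N,p,q)=\min\{C',C''\}$ with $C'=\Big(\frac{p^*S^{p^*/p}(p-q\gamma_{q})}{p(p^*-q\gamma_{q})}\Big)^{\frac{p-q\gamma_{q}}{p^*-p}}\frac{q(p^*-p)}{pC_{N,p,q}(p^*-q\gamma_{q})}$, $C''=\frac{pp^*}{N\gamma_{q}C_{N,p,q}(p^*-p)}\Big(\frac{q\gamma_{q}S^{N/p}}{p-q\gamma_{q}}\Big)^{\frac{p-q\gamma_{q}}{p}}$. *)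

From Stdlib Require Export Reals.
Open Scope R_scope.

Definition pstar (N : nat) (p : R) : R := INR N * p / (INR N - p).

Definition gammaq (N : nat) (p q : R) : R := INR N * (q - p) / (p * q).

(* C' ; S = Sobolev constant, C = Gagliardo-Nirenberg constant C_{N,p,q} *)
Definition Cprime (N : nat) (p q S C : R) : R :=
  let ps := pstar N p in
  let g := gammaq N p q in
  Rpower (ps * Rpower S (ps / p) * (p - q * g) / (p * (ps - q * g)))
         ((p - q * g) / (ps - p))
  * (q * (ps - p) / (p * C * (ps - q * g))).

Definition Csecond (N : nat) (p q S C : R) : R :=
  let ps := pstar N p in
  let g := gammaq N p q in
  p * ps / (INR N * g * C * (ps - p))
  * Rpower (q * g * Rpower S (INR N / p) / (p - q * g)) ((p - q * g) / p).

Definition alpha (N : nat) (p q S C : R) : R :=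
  Rmin (Cprime N p q S C) (Csecond N p q S C).

Definition hfun (N : nat) (p q S C a mu : R) (t : R) : R :=
  let ps := pstar N p in
  let g := gammaq N p q in
  1 / p * Rpower t p
  - mu / q * C * Rpower a (q * (1 - g)) * Rpower t (q * g)
  - 1 / (ps * Rpower S (ps / p)) * Rpower t ps.

From Stdlib Require Import Reals Lra Psatz Ranalysis5.
Open Scope R_scope.

(* Write h(t) = t^p/p - B t^r - D t^(p^* ) with r = q γ_q, so that
   0 < r < p < p^*.  Then h(t) = t^r φ(t) with φ(t) = t^(p-r)/p - D t^(p^*-r) - B.
   A function K1 t^α - K2 t^β - c with 0 < α < β and positive coefficients
   increases up to its unique critical point, decreases afterwards and is
   negative near 0 and near ∞; so if it is positive somewhere, it is negative,
   positive, negative on (0,∞) with exactly two roots.  For φ, positivity at the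
   critical point is precisely the condition μ a^(q(1-γ_q)) < C', which yields the roots R0 < R1 of h.  Moreover
   h'(t) = t^(r-1) ψ(t) with ψ of the same shape, and ψ is positive somewhere
   because h rises on (R0, R1) by the mean value theorem.  Hence h' has sign
   pattern -, +, - with roots t1 < t2: t1 is a local minimum with h(t1) < 0
   (h is negative near 0 and decreasing up to t1), and t2 is the global maximum,
   with h(t2) > 0. *)

Lemma Rpower_pos (x y : R) : 0 < Rpower x y.
Proof. unfold Rpower; apply exp_pos. Qed.

Lemma Rpower_split (x a b : R) : Rpower x b = Rpower x a * Rpower x (b - a).
Proof. rewrite <- Rpower_plus; f_equal; ring. Qed.

Lemma Rpower_root (y e : R) : 0 < y -> e <> 0 -> Rpower (Rpower y (1 / e)) e = y.
Proof.
  intros Hy He. rewrite Rpower_mult.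
  replace (1 / e * e) with 1 by (field; exact He).
  now apply Rpower_1.
Qed.

Lemma Rpower_lt_iff (x y e : R) :
  0 < e -> 0 < x -> 0 < y -> (x < y <-> Rpower x e < Rpower y e).
Proof.
  intros He Hx Hy; split; intro H.
  - apply Rlt_Rpower_l; lra.
  - destruct (Rlt_or_le x y) as [Hlt | Hle]; [exact Hlt |].
    assert (Rpower y e <= Rpower x e) by (apply Rle_Rpower_l; lra).
    lra.
Qed.

Lemma Rpower_lt_root_iff (t y e : R) :
  0 < e -> 0 < t -> 0 < y -> (t < Rpower y (1 / e) <-> Rpower t e < y).
Proof.
  intros He Ht Hy.
  rewrite (Rpower_lt_iff t _ e), Rpower_root; try lra; apply Rpower_pos.
Qed.

Lemma Rpower_root_lt_iff (t y e : R) :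
  0 < e -> 0 < t -> 0 < y -> (Rpower y (1 / e) < t <-> y < Rpower t e).
Proof.
  intros He Ht Hy.
  rewrite (Rpower_lt_iff _ t e), Rpower_root; try lra; apply Rpower_pos.
Qed.

Lemma incr_of_derive_pos (f f' : R -> R) (x y : R) :
  x < y -> (forall c, x <= c <= y -> derivable_pt_lim f c (f' c)) ->
  (forall c, x < c < y -> 0 < f' c) -> f x < f y.
Proof.
  intros Hxy Hd Hpos.
  destruct (MVT_cor2 f f' x y Hxy Hd) as [c [Hc Hcxy]].
  specialize (Hpos c Hcxy). nra.
Qed.

Lemma decr_of_derive_neg (f f' : R -> R) (x y : R) :
  x < y -> (forall c, x <= c <= y -> derivable_pt_lim f c (f' c)) ->
  (forall c, x < c < y -> f' c < 0) -> f y < f x.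
Proof.
  intros Hxy Hd Hneg.
  destruct (MVT_cor2 f f' x y Hxy Hd) as [c [Hc Hcxy]].
  specialize (Hneg c Hcxy). nra.
Qed.

Lemma derive_pos_of_lt (f f' : R -> R) (x y : R) :
  x < y -> f x < f y -> (forall c, x <= c <= y -> derivable_pt_lim f c (f' c)) ->
  exists c, x < c < y /\ 0 < f' c.
Proof.
  intros Hxy Hf Hd.
  destruct (MVT_cor2 f f' x y Hxy Hd) as [c [Hc Hcxy]].
  exists c; split; [exact Hcxy | nra].
Qed.

Definition neg_pos_neg (g : R -> R) (z1 z2 : R) : Prop :=
  0 < z1 /\ z1 < z2 /\ g z1 = 0 /\ g z2 = 0 /\
  (forall t, z1 < t < z2 -> 0 < g t) /\
  (forall t, 0 < t -> t < z1 \/ z2 < t -> g t < 0).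

Lemma neg_pos_neg_cases (g : R -> R) (z1 z2 t : R) :
  neg_pos_neg g z1 z2 -> 0 < t ->
  (g t < 0 /\ (t < z1 \/ z2 < t)) \/ (g t = 0 /\ (t = z1 \/ t = z2)) \/
  (0 < g t /\ z1 < t < z2).
Proof.
  intros (Hz1 & Hz12 & Hg1 & Hg2 & Hpos & Hneg) Ht.
  destruct (Rtotal_order t z1) as [Hlt | [-> | Hgt]].
  - left; auto.
  - right; left; auto.
  - destruct (Rtotal_order t z2) as [Hlt | [-> | Hgt']].
    + right; right; auto.
    + right; left; auto.
    + left; auto.
Qed.

Lemma neg_pos_neg_pos_iff (g : R -> R) (z1 z2 t : R) :
  neg_pos_neg g z1 z2 -> 0 < t -> (0 < g t <-> z1 < t < z2).
Proof. intros Hg Ht; destruct (neg_pos_neg_cases g z1 z2 t Hg Ht); lra. Qed.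

Lemma neg_pos_neg_root_iff (g : R -> R) (z1 z2 t : R) :
  neg_pos_neg g z1 z2 -> 0 < t -> (g t = 0 <-> t = z1 \/ t = z2).
Proof.
  intros Hg Ht; pose proof Hg as (_ & Hz12 & _).
  destruct (neg_pos_neg_cases g z1 z2 t Hg Ht); lra.
Qed.

Lemma neg_pos_neg_scale (w g f : R -> R) (z1 z2 : R) :
  (forall t, 0 < t -> 0 < w t) -> (forall t, f t = w t * g t) ->
  neg_pos_neg g z1 z2 -> neg_pos_neg f z1 z2.
Proof.
  intros Hw Hf (Hz1 & Hz12 & Hg1 & Hg2 & Hpos & Hneg).
  repeat split; try lra.
  - rewrite Hf, Hg1; ring.
  - rewrite Hf, Hg2; ring.
  - intros t Ht; rewrite Hf.
    apply Rmult_lt_0_compat; [apply Hw; lra | now apply Hpos].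
  - intros t Ht Hout; rewrite Hf.
    specialize (Hw t Ht); specialize (Hneg t Ht Hout); nra.
Qed.

Lemma unimodal_neg_pos_neg (g g' : R -> R) (m : R) :
  (forall t, 0 < t -> derivable_pt_lim g t (g' t)) ->
  (forall t, 0 < t < m -> 0 < g' t) -> (forall t, m < t -> g' t < 0) ->
  (exists t, 0 < t < m /\ g t < 0) -> (exists t, m < t /\ g t < 0) ->
  (exists t, 0 < t /\ 0 < g t) ->
  exists z1 z2, neg_pos_neg g z1 z2.
Proof.
  intros Hd Hup Hdown [ts [Hts Hgts]] [tb [Htb Hgtb]] [t0 [Ht0 Hgt0]].
  assert (Hincr : forall x y, 0 < x -> x < y -> y <= m -> g x < g y).
  { intros x y Hx Hxy Hy; apply (incr_of_derive_pos g g'); [lra | |];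
      intros c Hc; [apply Hd | apply Hup]; lra. }
  assert (Hdecr : forall x y, m <= x -> x < y -> g y < g x).
  { intros x y Hx Hxy; apply (decr_of_derive_neg g g'); [lra | |];
      intros c Hc; [apply Hd | apply Hdown]; lra. }
  assert (Hgm : 0 < g m).
  { destruct (Rtotal_order t0 m) as [H | [<- | H]]; [| lra |].
    - specialize (Hincr t0 m Ht0 H (Rle_refl m)); lra.
    - specialize (Hdecr m t0 (Rle_refl m) H); lra. }
  assert (Hcont : forall t, 0 < t -> continuity_pt g t).
  { intros t Ht; apply derivable_continuous_pt; exists (g' t); now apply Hd. }
  destruct (IVT_interv g ts m) as [z1 [Hz1 Hgz1]]; try lra.
  { intros t Ht; apply Hcont; lra. }
  destruct (IVT_interv (fun t => - g t) m tb) as [z2 [Hz2 Hgz2]]; try lra.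
  { intros t Ht; apply continuity_pt_opp, Hcont; lra. }
  assert (Hz1_in : ts < z1 < m).
  { destruct Hz1 as [[Hlo | <-] [Hhi | ->]]; lra. }
  assert (Hz2_in : m < z2 < tb).
  { destruct Hz2 as [[Hlo | <-] [Hhi | ->]]; lra. }
  exists z1, z2; repeat split; try lra.
  - intros t Ht. destruct (Rle_lt_dec t m).
    + specialize (Hincr z1 t ltac:(lra) (proj1 Ht) ltac:(lra)); lra.
    + specialize (Hdecr t z2 ltac:(lra) (proj2 Ht)); lra.
  - intros t Ht [Hlt | Hgt].
    + specialize (Hincr t z1 Ht Hlt ltac:(lra)); lra.
    + specialize (Hdecr z2 t ltac:(lra) Hgt); lra.
Qed.

Definition pow_hump (K1 al K2 be c t : R) : R :=
  K1 * Rpower t al - K2 * Rpower t be - c.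

Definition pow_hump_peak (K1 al K2 be : R) : R :=
  Rpower (al * K1 / (be * K2)) (1 / (be - al)).

Lemma derivable_pt_lim_scal_Rpower (K a t : R) :
  0 < t -> derivable_pt_lim (fun x => K * Rpower x a) t (K * (a * Rpower t (a - 1))).
Proof.
  intro Ht. apply (derivable_pt_lim_scal (fun x => Rpower x a)).
  now apply derivable_pt_lim_power.
Qed.

Lemma pow_hump_derive (K1 al K2 be c t : R) : 0 < t ->
  derivable_pt_lim (pow_hump K1 al K2 be c) t
    (Rpower t (al - 1) * (al * K1 - be * K2 * Rpower t (be - al))).
Proof.
  intro Ht.
  replace (Rpower t (al - 1) * (al * K1 - be * K2 * Rpower t (be - al)))
    with (K1 * (al * Rpower t (al - 1)) - K2 * (be * Rpower t (be - 1)) - 0)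
    by (rewrite (Rpower_split t (al - 1) (be - 1));
        replace (be - 1 - (al - 1)) with (be - al) by ring; ring).
  apply (derivable_pt_lim_minus
           (fun x => K1 * Rpower x al - K2 * Rpower x be) (fun _ => c));
    [apply (derivable_pt_lim_minus (fun x => K1 * Rpower x al))
    | apply derivable_pt_lim_const];
    now apply derivable_pt_lim_scal_Rpower.
Qed.

Lemma pow_hump_peak_value (K1 al K2 be c : R) :
  0 < al < be -> 0 < K1 -> 0 < K2 ->
  pow_hump K1 al K2 be c (pow_hump_peak K1 al K2 be)
  = (be - al) / be * K1 * Rpower (al * K1 / (be * K2)) (al / (be - al)) - c.
Proof.
  intros Hal HK1 HK2. unfold pow_hump.
  assert (HX : 0 < al * K1 / (be * K2)) by (apply Rdiv_lt_0_compat; nra).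
  assert (Hpeak : Rpower (pow_hump_peak K1 al K2 be) (be - al) = al * K1 / (be * K2))
    by (apply Rpower_root; lra).
  rewrite (Rpower_split _ al be), Hpeak. unfold pow_hump_peak. rewrite Rpower_mult.
  replace (1 / (be - al) * al) with (al / (be - al)) by (field; lra).
  field; lra.
Qed.

Lemma pow_hump_neg_near_zero (K1 al K2 be c t : R) :
  0 < al -> 0 < K1 -> 0 < K2 -> 0 < c -> 0 < t -> t < Rpower (c / K1) (1 / al) ->
  pow_hump K1 al K2 be c t < 0.
Proof.
  intros Hal HK1 HK2 Hc Ht Hsmall.
  rewrite Rpower_lt_root_iff in Hsmall by (try apply Rdiv_lt_0_compat; lra).
  assert (K1 * Rpower t al < c).
  { replace c with (K1 * (c / K1)) by (field; lra). now apply Rmult_lt_compat_l. }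
  pose proof (Rpower_pos t be). unfold pow_hump. nra.
Qed.

Lemma pow_hump_neg_near_infty (K1 al K2 be c t : R) :
  al < be -> 0 < K1 -> 0 < K2 -> 0 < c -> Rpower (K1 / K2) (1 / (be - al)) < t ->
  pow_hump K1 al K2 be c t < 0.
Proof.
  intros Hal HK1 HK2 Hc Hlarge.
  assert (Ht : 0 < t) by (pose proof (Rpower_pos (K1 / K2) (1 / (be - al))); lra).
  rewrite Rpower_root_lt_iff in Hlarge by (try apply Rdiv_lt_0_compat; lra).
  assert (K1 < K2 * Rpower t (be - al)).
  { replace K1 with (K2 * (K1 / K2)) by (field; lra). now apply Rmult_lt_compat_l. }
  pose proof (Rpower_pos t al). unfold pow_hump. rewrite (Rpower_split t al be). nra.
Qed.

Lemma pow_hump_neg_pos_neg (K1 al K2 be c : R) :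
  0 < al < be -> 0 < K1 -> 0 < K2 -> 0 < c ->
  (exists t, 0 < t /\ 0 < pow_hump K1 al K2 be c t) ->
  exists z1 z2, neg_pos_neg (pow_hump K1 al K2 be c) z1 z2.
Proof.
  intros Hal HK1 HK2 Hc Hpos.
  set (X := al * K1 / (be * K2)).
  assert (HX : 0 < X) by (apply Rdiv_lt_0_compat; nra).
  set (m := pow_hump_peak K1 al K2 be).
  assert (Hm : 0 < m) by apply Rpower_pos.
  assert (Hcoef : forall t, Rpower t (al - 1) * (al * K1 - be * K2 * Rpower t (be - al))
                          = be * K2 * Rpower t (al - 1) * (X - Rpower t (be - al)))
    by (intro t; unfold X; field; lra).
  assert (Hweight : forall t, 0 < be * K2 * Rpower t (al - 1))
    by (intro t; pose proof (Rpower_pos t (al - 1)); apply Rmult_lt_0_compat; nra).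
  apply (unimodal_neg_pos_neg _ _ m (fun t Ht => pow_hump_derive K1 al K2 be c t Ht)).
  - intros t Ht. rewrite Hcoef. apply Rmult_lt_0_compat; [apply Hweight |].
    assert (Rpower t (be - al) < X)
      by (apply (Rpower_lt_root_iff t X (be - al)); [lra | lra | exact HX | exact (proj2 Ht)]).
    lra.
  - intros t Ht. rewrite Hcoef. specialize (Hweight t).
    assert (X < Rpower t (be - al))
      by (apply (Rpower_root_lt_iff t X (be - al)); [lra | lra | exact HX | exact Ht]).
    nra.
  - set (u := Rpower (c / K1) (1 / al)).
    assert (Hu : 0 < u) by apply Rpower_pos.
    exists (Rmin (m / 2) (u / 2)).
    pose proof (Rmin_l (m / 2) (u / 2)); pose proof (Rmin_r (m / 2) (u / 2)).
    assert (0 < Rmin (m / 2) (u / 2)) by (apply Rmin_glb_lt; lra).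
    split; [lra |]. apply pow_hump_neg_near_zero; fold u; lra.
  - set (v := Rpower (K1 / K2) (1 / (be - al))).
    exists (Rmax m v + 1).
    pose proof (Rmax_l m v); pose proof (Rmax_r m v).
    split; [lra |]. apply pow_hump_neg_near_infty; fold v; lra.
  - exact Hpos.
Qed.

Lemma neg_pos_neg_derive_monotone (f f' : R -> R) (t1 t2 : R) :
  (forall t, 0 < t -> derivable_pt_lim f t (f' t)) -> neg_pos_neg f' t1 t2 ->
  (forall x y, 0 < x -> x < y -> y <= t1 -> f y < f x) /\
  (forall x y, t1 <= x -> x < y -> y <= t2 -> f x < f y) /\
  (forall x y, t2 <= x -> x < y -> f y < f x).
Proof.
  intros Hd (Ht1 & Ht12 & _ & _ & Hf'pos & Hf'neg).
  split; [| split].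
  - intros x y Hx Hxy Hy; apply (decr_of_derive_neg f f'); [lra | |];
      intros c Hc; [apply Hd | apply Hf'neg]; lra.
  - intros x y Hx Hxy Hy; apply (incr_of_derive_pos f f'); [lra | |];
      intros c Hc; [apply Hd | apply Hf'pos]; lra.
  - intros x y Hx Hxy; apply (decr_of_derive_neg f f'); [lra | |];
      intros c Hc; [apply Hd | apply Hf'neg]; lra.
Qed.

Lemma neg_pos_neg_derive_extrema (f f' : R -> R) (t1 t2 z1 z2 : R) :
  (forall t, 0 < t -> derivable_pt_lim f t (f' t)) ->
  neg_pos_neg f' t1 t2 -> neg_pos_neg f z1 z2 ->
  (forall t, 0 < t -> (derivable_pt_lim f t 0 <-> t = t1 \/ t = t2)) /\
  (exists eps, 0 < eps /\ forall t, 0 < t -> Rabs (t - t1) < eps -> f t1 <= f t) /\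
  f t1 < 0 /\ (forall t, 0 < t -> f t <= f t2) /\ 0 < f t2.
Proof.
  intros Hd Hf' Hf.
  pose proof Hf' as (Ht1 & Ht12 & _).
  pose proof Hf as (Hz1 & Hz12 & _ & _ & Hfpos & Hfneg).
  destruct (neg_pos_neg_derive_monotone f f' t1 t2 Hd Hf') as (Hdecr1 & Hincr & Hdecr2).
  assert (Hneg : forall t, 0 < t -> t <= t1 -> f t < 0).
  { intros t Ht Htt1.
    set (u := Rmin z1 t / 2).
    assert (0 < Rmin z1 t) by (apply Rmin_glb_lt; lra).
    pose proof (Rmin_l z1 t); pose proof (Rmin_r z1 t).
    assert (f u < 0) by (apply Hfneg; unfold u; lra).
    specialize (Hdecr1 u t ltac:(unfold u; lra) ltac:(unfold u; lra) Htt1); lra. }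
  assert (Hbelow_t2 : forall t, t1 <= t -> f t <= f t2).
  { intros t Ht. destruct (Rtotal_order t t2) as [H | [-> | H]]; [| lra |].
    - left; apply Hincr; lra.
    - left; apply Hdecr2; lra. }
  assert (Hft2 : 0 < f t2).
  { set (w := (z1 + z2) / 2).
    assert (0 < f w) by (apply Hfpos; unfold w; lra).
    destruct (Rle_lt_dec w t1) as [Hw | Hw].
    - specialize (Hneg w ltac:(unfold w; lra) Hw); lra.
    - specialize (Hbelow_t2 w ltac:(lra)); lra. }
  split; [| split; [| split; [| split]]].
  - intros t Ht. rewrite <- (neg_pos_neg_root_iff f' t1 t2 t Hf' Ht).
    split; intro Hcrit.
    + exact (uniqueness_limite f t _ _ (Hd t Ht) Hcrit).
    + rewrite <- Hcrit. now apply Hd.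
  - exists (t2 - t1); split; [lra |]. intros t Ht Hnear.
    apply Rabs_def2 in Hnear.
    destruct (Rtotal_order t t1) as [H | [-> | H]]; [| lra |].
    + left; apply Hdecr1; lra.
    + left; apply Hincr; lra.
  - apply Hneg; lra.
  - intros t Ht. destruct (Rle_lt_dec t t1) as [H | H].
    + specialize (Hneg t Ht H); lra.
    + apply Hbelow_t2; lra.
  - exact Hft2.
Qed.

Definition pow_trinomial (A p B r D s t : R) : R :=
  A * Rpower t p - B * Rpower t r - D * Rpower t s.

Lemma pow_trinomial_factor (A p B r D s t : R) :
  pow_trinomial A p B r D s t = Rpower t r * pow_hump A (p - r) D (s - r) B t.
Proof.
  unfold pow_trinomial, pow_hump.
  rewrite (Rpower_split t r p), (Rpower_split t r s); ring.
Qed.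

Lemma pow_trinomial_derive (A p B r D s t : R) : 0 < t ->
  derivable_pt_lim (pow_trinomial A p B r D s) t
    (Rpower t (r - 1) * pow_hump (p * A) (p - r) (s * D) (s - r) (r * B) t).
Proof.
  intro Ht.
  replace (Rpower t (r - 1) * pow_hump (p * A) (p - r) (s * D) (s - r) (r * B) t)
    with (A * (p * Rpower t (p - 1)) - B * (r * Rpower t (r - 1))
          - D * (s * Rpower t (s - 1)))
    by (unfold pow_hump; rewrite (Rpower_split t (r - 1) (p - 1)),
          (Rpower_split t (r - 1) (s - 1));
        replace (p - 1 - (r - 1)) with (p - r) by ring;
        replace (s - 1 - (r - 1)) with (s - r) by ring; ring).
  apply (derivable_pt_lim_minus
           (fun x => A * Rpower x p - B * Rpower x r) (fun x => D * Rpower x s));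
    [apply (derivable_pt_lim_minus (fun x => A * Rpower x p)) |];
    now apply derivable_pt_lim_scal_Rpower.
Qed.

Lemma pow_trinomial_shape (A p B r D s : R) :
  0 < r -> r < p -> p < s -> 0 < A -> 0 < B -> 0 < D ->
  (exists t0, 0 < t0 /\ 0 < pow_hump A (p - r) D (s - r) B t0) ->
  let f := pow_trinomial A p B r D s in
  (exists t1 t2 : R,
      0 < t1 /\ 0 < t2 /\ t1 <> t2 /\
      (forall t, 0 < t -> (derivable_pt_lim f t 0 <-> (t = t1 \/ t = t2))) /\
      (exists eps, 0 < eps /\
         forall t, 0 < t -> Rabs (t - t1) < eps -> f t1 <= f t) /\
      f t1 < 0 /\
      (forall t, 0 < t -> f t <= f t2) /\
      0 < f t2) /\
  (exists R0 R1 : R,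
      0 < R0 /\ R0 < R1 /\ f R0 = 0 /\ f R1 = 0 /\
      (forall t, 0 < t -> (0 < f t <-> (R0 < t /\ t < R1)))).
Proof.
  intros Hr Hrp Hps HA HB HD Hpeak f.
  set (psi := pow_hump (p * A) (p - r) (s * D) (s - r) (r * B)).
  set (f' := fun t => Rpower t (r - 1) * psi t).
  assert (Hd : forall t, 0 < t -> derivable_pt_lim f t (f' t))
    by (intros t Ht; now apply pow_trinomial_derive).
  destruct (pow_hump_neg_pos_neg A (p - r) D (s - r) B) as [z1 [z2 Hphi]];
    try lra; try assumption.
  assert (Hf : neg_pos_neg f z1 z2)
    by (apply (neg_pos_neg_scale (fun t => Rpower t r) _ _ _ _ (fun t _ => Rpower_pos t r)
                 (pow_trinomial_factor A p B r D s) Hphi)).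
  pose proof Hf as (Hz1 & Hz12 & Hfz1 & Hfz2 & Hfpos & _).
  destruct (derive_pos_of_lt f f' z1 ((z1 + z2) / 2)) as [c [Hc Hf'c]];
    [lra | rewrite Hfz1; apply Hfpos; lra | intros c Hc; apply Hd; lra |].
  assert (Hpsi_c : 0 < psi c)
    by (pose proof (Rpower_pos c (r - 1)); unfold f' in Hf'c; nra).
  destruct (pow_hump_neg_pos_neg (p * A) (p - r) (s * D) (s - r) (r * B))
    as [t1 [t2 Hpsi]]; try nra; [exists c; split; [lra | exact Hpsi_c] |].
  assert (Hf' : neg_pos_neg f' t1 t2)
    by (apply (neg_pos_neg_scale (fun t => Rpower t (r - 1)) psi _ _ _
                 (fun t _ => Rpower_pos t (r - 1)) (fun t => eq_refl) Hpsi)).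
  pose proof Hpsi as (Ht1 & Ht12 & _).
  split.
  - exists t1, t2. do 3 (split; [lra |]).
    exact (neg_pos_neg_derive_extrema f f' t1 t2 z1 z2 Hd Hf' Hf).
  - exists z1, z2. do 4 (split; [assumption |]).
    intros t Ht; exact (neg_pos_neg_pos_iff f z1 z2 t Hf Ht).
Qed.

Lemma gammaq_exponents_ordered (N : nat) (p q : R) :
  1 < p -> p < INR N -> p < q -> q < p + p ^ 2 / INR N ->
  0 < q * gammaq N p q /\ q * gammaq N p q < p /\ p < pstar N p.
Proof.
  intros Hp HpN Hpq Hq. unfold gammaq, pstar.
  split; [| split].
  - replace (q * (INR N * (q - p) / (p * q))) with (INR N / p * (q - p)) by (field; lra).
    apply Rmult_lt_0_compat; [apply Rdiv_lt_0_compat |]; lra.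
  - replace (q * (INR N * (q - p) / (p * q)))
      with (p - INR N / p * (p + p ^ 2 / INR N - q)) by (field; lra).
    assert (0 < INR N / p * (p + p ^ 2 / INR N - q))
      by (apply Rmult_lt_0_compat; [apply Rdiv_lt_0_compat |]; lra).
    lra.
  - replace (INR N * p / (INR N - p)) with (p + p ^ 2 / (INR N - p)) by (field; lra).
    assert (0 < p ^ 2 / (INR N - p)) by (apply Rdiv_lt_0_compat; nra).
    lra.
Qed.

Lemma Cprime_hump_peak_pos (N : nat) (p q S C mu b : R) :
  let r := q * gammaq N p q in
  let s := pstar N p in
  let D := 1 / (s * Rpower S (s / p)) in
  1 < p -> p < q -> r < p -> p < s -> 0 < C -> mu * b < Cprime N p q S C ->
  0 < pow_hump (1 / p) (p - r) D (s - r) (mu / q * C * b)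
        (pow_hump_peak (1 / p) (p - r) D (s - r)).
Proof.
  intros r s D Hp Hpq Hrp Hps HC Hsmall.
  set (SS := Rpower S (s / p)) in *.
  assert (HSS : 0 < SS) by apply Rpower_pos.
  assert (HD : 0 < D) by (apply Rdiv_lt_0_compat; [lra | apply Rmult_lt_0_compat; lra]).
  rewrite pow_hump_peak_value by (try exact HD; try apply Rdiv_lt_0_compat; lra).
  replace (s - r - (p - r)) with (s - p) by ring.
  replace ((p - r) * (1 / p) / ((s - r) * D)) with (s * SS * (p - r) / (p * (s - r)))
    by (unfold D; field; lra).
  change (Cprime N p q S C) with
    (Rpower (s * SS * (p - r) / (p * (s - r))) ((p - r) / (s - p))
     * (q * (s - p) / (p * C * (s - r)))) in Hsmall.
  set (Y := Rpower (s * SS * (p - r) / (p * (s - r))) ((p - r) / (s - p))) in *.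
  replace ((s - p) / (s - r) * (1 / p) * Y - mu / q * C * b)
    with (C / q * (Y * (q * (s - p) / (p * C * (s - r))) - mu * b))
    by (field; lra).
  apply Rmult_lt_0_compat; [apply Rdiv_lt_0_compat |]; lra.
Qed.

Theorem lemma4p2 (N : nat) (p q S C a mu : R) :
  (2 <= N)%nat ->
  1 < p -> p < INR N ->
  p < q -> q < p + p ^ 2 / INR N ->
  0 < S -> 0 < C ->
  0 < a -> 0 < mu ->
  mu * Rpower a (q * (1 - gammaq N p q)) < alpha N p q S C ->
  let h := hfun N p q S C a mu in
  (exists t1 t2 : R,
      0 < t1 /\ 0 < t2 /\ t1 <> t2 /\
      (forall t, 0 < t -> (derivable_pt_lim h t 0 <-> (t = t1 \/ t = t2))) /\
      (exists eps, 0 < eps /\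
         forall t, 0 < t -> Rabs (t - t1) < eps -> h t1 <= h t) /\
      h t1 < 0 /\
      (forall t, 0 < t -> h t <= h t2) /\
      0 < h t2) /\
  (exists R0 R1 : R,
      0 < R0 /\ R0 < R1 /\ h R0 = 0 /\ h R1 = 0 /\
      (forall t, 0 < t -> (0 < h t <-> (R0 < t /\ t < R1)))).
Proof.
  intros _ Hp HpN Hpq Hq _ HC _ Hmu Hsmall h.
  destruct (gammaq_exponents_ordered N p q Hp HpN Hpq Hq) as (Hr & Hrp & Hps).
  assert (HSS : 0 < Rpower S (pstar N p / p)) by apply Rpower_pos.
  assert (Ha' : 0 < Rpower a (q * (1 - gammaq N p q))) by apply Rpower_pos.
  apply (pow_trinomial_shape (1 / p) p (mu / q * C * Rpower a (q * (1 - gammaq N p q)))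
           (q * gammaq N p q) (1 / (pstar N p * Rpower S (pstar N p / p))) (pstar N p));
    try assumption.
  - apply Rdiv_lt_0_compat; lra.
  - apply Rmult_lt_0_compat; [apply Rmult_lt_0_compat; [apply Rdiv_lt_0_compat |] |]; lra.
  - apply Rdiv_lt_0_compat; [lra | apply Rmult_lt_0_compat; lra].
  - eexists; split; [apply Rpower_pos |].
    apply Cprime_hump_peak_pos; try assumption.
    apply (Rlt_le_trans _ _ _ Hsmall), Rmin_l.
Qed.
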